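(* Let $L$ be an infinite set and let $Q$ be either the edgeless cube $Q_L$ or the edged cube $\bar Q_L$. The quotient $\mathrm{UC}_L=\mathrm{uc}_L/{\sim}$, with the operation induced by concatenation, is a group containing $G_L$ (the finite basic sequences modulo $\sim$) as a subgroup. Furthermore, every element of $\mathrm{UC}_L$ has order at most $\operatorname{lcm}\{\text{order of }\pi:\pi\in S_{24}\}$.
   Context: Let $L$ be an infinite set, $-L=\{-r:r\in L\}$ a disjoint copy of $L$, and $0$ a new element; $L^\dagger=-L\cup\{0\}\cup L$ with $-(-r)=r$, $-0=0$. Adjoin $\pm\infty$ with $-(+\infty)=-\infty$ and set $\bar L^\dagger=L^\dagger\cup\{\pm\infty\}$. Points of $U=(\bar L^\dagger)^3$ have coordinates $x,y,z$. The edgeless cube $Q_L$ is the set of points of $U$ with exactly one coordinate in $\{\pm\infty\}$ (cells). The edged cube $\bar Q_L$ is the set of cells $(p,i)$ with $p\in U$, $i\in\{x,y,z\}$, $p_i\in\{\pm\infty\}$ ($i$ marks the face). For $i\in\{x,y,z\}$, $\alpha\in\bar L^\dagger$, the quarter-turn twist $T_{i,\alpha}$ is the permutation of cells fixing every cell whose point $p$ has $p_i\ne\alpha$ and acting on the others by $T_{x,\alpha}(\alpha,y,z)=(\alpha,-z,y)$, $T_{y,\alpha}(x,\alpha,z)=(z,\alpha,-x)$, $T_{z,\alpha}(x,y,\alpha)=(-y,x,\alpha)$ (in $\bar Q_L$ the marked coordinate is carried along by the rotation). Basic twists are $T,T^2,T^3$ for quarter-turn twists $T$. A basic sequence is a sequence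 $\langle\sigma_\eta:\eta<\theta\rangle$ of basic twists of ordinal length $\theta$. A labelling is a map $f$ from cells to $X\cup\{\mathrm{NaC}\}$ for a set $X\not\ni\mathrm{NaC}$; it is legal if it never takes value NaC; a configuration is a labelling with $X$ the six colors red, white, green, orange, yellow, blue. A twist $\sigma$ acts by $(\sigma f)(c)=f(\sigma^{-1}c)$. Applying $\vec\sigma=\langle\sigma_\eta:\eta<\theta\rangle$ to $f_0$ produces $f_{\eta+1}=\sigma_\eta f_\eta$, and for limit $\lambda\le\theta$, $f_\lambda(c)$ is the eventually constant value of $f_\eta(c)$ ($\eta<\lambda$) if it exists and NaC otherwise; the terminal labelling is $\vec\sigma f_0$. $\vec\sigma$ is universally convergent if $\vec\sigma\,\mathrm{id}$ is legal, where $\mathrm{id}$ labels each cell by itself. $\vec\sigma\sim\vec\tau$ means $\vec\sigma f=\vec\tau f$ for every configuration $f$. $\mathrm{uc}_L$ is the set of universally convergent basic sequences with concatenation ($\vec\tau\vec\sigma$ means $\vec\sigma$ followed by $\vec\tau$), and $G_L$ is the set of finite basic sequences modulo $\sim$. *)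

From Stdlib Require Import ClassicalEpsilon.
From mathcomp Require Import all_boot all_fingroup.
From mathcomp Require Import zify.

Set Implicit Arguments.
Unset Strict Implicit.
Unset Printing Implicit Defensive.

Definition infinite_type (L : Type) : Prop :=
  forall l : list L, exists x : L, ~ List.In x l.

(* bar L^dagger = -L ∪ {0} ∪ L ∪ {±oo} *)
Inductive coord (L : Type) : Type :=
| CPos of L
| CNeg of L
| CZero
| CPinf
| CMinf.
Arguments CZero {L}.
Arguments CPinf {L}.
Arguments CMinf {L}.

Definition cneg (L : Type) (c : coord L) : coord L :=
  match c with
  | CPos r => CNeg r | CNeg r => CPos r | CZero => CZero
  | CPinf => CMinf | CMinf => CPinf
  end.

Definition isinf (L : Type) (c : coord L) : bool :=
  match c with CPinf | CMinf => true | _ => false end.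

Lemma isinf_neg (L : Type) (c : coord L) : isinf (cneg c) = isinf c.
Proof. by case: c. Qed.

Record point (L : Type) := Pt { px : coord L; py : coord L; pz : coord L }.

Inductive axis := AX | AY | AZ.

Definition getc (L : Type) (p : point L) (i : axis) : coord L :=
  match i with AX => px p | AY => py p | AZ => pz p end.

Definition rot (L : Type) (i : axis) (p : point L) : point L :=
  match i with
  | AX => Pt (px p) (cneg (pz p)) (py p)
  | AY => Pt (pz p) (py p) (cneg (px p))
  | AZ => Pt (cneg (py p)) (px p) (pz p)
  end.

(* the marked coordinate carried along by the rotation *)
Definition rotmark (i j : axis) : axis :=
  match i, j with
  | AX, AY => AZ | AX, AZ => AY
  | AY, AX => AZ | AY, AZ => AX
  | AZ, AX => AY | AZ, AY => AX
  | _, j => j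
  end.

Definition qturn_pt (L : Type) (i : axis) (a : coord L) (p : point L) : point L :=
  if excluded_middle_informative (getc p i = a) then rot i p else p.

Definition qturn_pm (L : Type) (i : axis) (a : coord L) (pm : point L * axis)
  : point L * axis :=
  if excluded_middle_informative (getc pm.1 i = a)
  then (rot i pm.1, rotmark i pm.2) else pm.

Definition ninf (L : Type) (p : point L) : nat :=
  isinf (px p) + isinf (py p) + isinf (pz p).

Definition onecell (L : Type) (p : point L) : bool := ninf p == 1.

Lemma ninf_rot (L : Type) i (p : point L) : ninf (rot i p) = ninf p.
Proof. case: i; rewrite /ninf /= !isinf_neg; lia. Qed.

Lemma onecell_qturn (L : Type) i (a : coord L) p :
  onecell p -> onecell (qturn_pt i a p).
Proof.
rewrite /qturn_pt; destruct (excluded_middle_informative _) => //.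
by rewrite /onecell ninf_rot.
Qed.

Lemma getc_rotmark (L : Type) i j (p : point L) :
  isinf (getc (rot i p) (rotmark i j)) = isinf (getc p j).
Proof. by case: i; case: j; rewrite /= ?isinf_neg. Qed.

Lemma dcell_qturn (L : Type) i (a : coord L) (pm : point L * axis) :
  isinf (getc pm.1 pm.2) ->
  isinf (getc (qturn_pm i a pm).1 (qturn_pm i a pm).2).
Proof.
rewrite /qturn_pm; destruct (excluded_middle_informative _) => //.
by rewrite /= getc_rotmark.
Qed.

Definition ecell (L : Type) := {p : point L | onecell p}.
Definition dcell (L : Type) := {pm : point L * axis | isinf (getc pm.1 pm.2)}.

Inductive cubekind := Edgeless | Edged.

Definition cell (L : Type) (k : cubekind) : Type :=
  match k with Edgeless => ecell L | Edged => dcell L end.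

Definition qturn_ecell (L : Type) i (a : coord L) (c : ecell L) : ecell L :=
  exist _ (qturn_pt i a (sval c)) (onecell_qturn i a (svalP c)).

Definition qturn_dcell (L : Type) i (a : coord L) (c : dcell L) : dcell L :=
  exist _ (qturn_pm i a (sval c)) (dcell_qturn i a (svalP c)).

Definition qturn_cell (L : Type) (k : cubekind) (i : axis) (a : coord L)
  : cell L k -> cell L k :=
  match k return cell L k -> cell L k with
  | Edgeless => qturn_ecell i a
  | Edged => qturn_dcell i a
  end.

Inductive tpow := P1 | P2 | P3.
Definition tpow_nat (t : tpow) : nat := match t with P1 => 1 | P2 => 2 | P3 => 3 end.

Record basic (L : Type) := Basic { baxis : axis; bval : coord L; bpow : tpow }.

Definition twist_apply (L : Type) (k : cubekind) (b : basic L) (c : cell L k)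
  : cell L k :=
  iter (tpow_nat (bpow b)) (@qturn_cell L k (baxis b) (bval b)) c.

(* a labelling with values in X ∪ {NaC}; None is NaC *)
Definition labelling (L : Type) (k : cubekind) (X : Type) := cell L k -> option X.

Definition legal (L : Type) (k : cubekind) (X : Type) (f : labelling L k X) : Prop :=
  forall c, f c <> None.

Definition idlab (L : Type) (k : cubekind) : labelling L k (cell L k) :=
  fun c => Some c.

Arguments idlab L k c : clear implicits.

Inductive color := Red | White | Green | Orange | Yellow | Blue.

(* A sequence indexed by a well-ordered type (i.e. of some ordinal length). *)
Record tseq (L : Type) := BSeq {
  idx : Type;
  ilt : idx -> idx -> Prop;
  tw  : idx -> basic L }.
Arguments idx {L} t.
Arguments ilt {L} t _ _.
Arguments tw {L} t _.

Definition is_wo (I : Type) (R : I -> I -> Prop) : Prop :=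
  (forall a, ~ R a a) /\
  (forall a b c, R a b -> R b c -> R a c) /\
  (forall a b, R a b \/ a = b \/ R b a) /\
  well_founded R.

Definition basic_seq (L : Type) (s : tseq L) : Prop := is_wo (ilt s).

Definition finite_seq (L : Type) (s : tseq L) : Prop :=
  exists l : list (idx s), forall a, List.In a l.

(* positions 0..theta: Some a = position a, None = theta (the end) *)
Definition plt (L : Type) (s : tseq L) (p q : option (idx s)) : Prop :=
  match p, q with
  | Some a, Some b => ilt s a b
  | Some _, None => True
  | None, _ => False
  end.

Arguments plt {L} s p q.

Definition ple (L : Type) (s : tseq L) (p q : option (idx s)) : Prop :=
  p = q \/ plt s p q.

Arguments ple {L} s p q.

Definition evconst (L : Type) (k : cubekind) (X : Type) (s : tseq L)
  (F : option (idx s) -> labelling L k X) (p : option (idx s)) (c : cell L k)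
  (v : option X) : Prop :=
  exists q0, plt s q0 p /\ forall q, ple s q0 q -> plt s q p -> F q c = v.

Definition is_run (L : Type) (k : cubekind) (X : Type) (s : tseq L)
  (f0 : labelling L k X) (F : option (idx s) -> labelling L k X) : Prop :=
  (forall p, (forall q, ~ plt s q p) -> F p = f0) /\
  (* successor step: p = a+1, f_{a+1} = sigma_a f_a, i.e. f_{a+1}(sigma_a c) = f_a(c) *)
  (forall a p, plt s (Some a) p -> (forall q, plt s (Some a) q -> ple s p q) ->
     forall c, F p (@twist_apply L k (tw s a) c) = F (Some a) c) /\
  (forall p, (exists q, plt s q p) ->
     (forall a, plt s (Some a) p -> exists q, plt s (Some a) q /\ plt s q p) ->
     forall c,
       (forall v, evconst F p c v -> F p c = v) /\
       ((forall v, ~ evconst F p c v) -> F p c = None)).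

Arguments is_run {L k X} s f0 F.

Definition runs_to (L : Type) (k : cubekind) (X : Type) (s : tseq L)
  (f0 : labelling L k X) (g : labelling L k X) : Prop :=
  exists F, is_run s f0 F /\ F None = g.

Arguments runs_to {L k X} s f0 g.

Definition uc (L : Type) (k : cubekind) (s : tseq L) : Prop :=
  basic_seq s /\ exists g, runs_to s (idlab L k) g /\ legal g.

Arguments uc {L} k s.

Definition sim (L : Type) (k : cubekind) (s t : tseq L) : Prop :=
  forall (f : labelling L k color) (g : labelling L k color),
    runs_to s f g <-> runs_to t f g.

Arguments sim {L} k s t.

(* concatenation: bcat t s = "t s" = s followed by t *)
Definition bcat (L : Type) (t s : tseq L) : tseq L :=
  @BSeq L (idx s + idx t)%type
    (fun u v => match u, v with
                | inl a, inl b => ilt s a b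
                | inr a, inr b => ilt t a b
                | inl _, inr _ => True
                | inr _, inl _ => False
                end)
    (fun u => match u with inl a => tw s a | inr a => tw t a end).

Definition bempty (L : Type) : tseq L :=
  @BSeq L Empty_set (fun _ _ => False) (fun e => match e with end).

Fixpoint bseqpow (L : Type) (s : tseq L) (n : nat) : tseq L :=
  match n with 0 => bempty L | n'.+1 => bcat s (bseqpow s n') end.

Definition S24_lcm_order : nat := \big[lcmn/1%N]_(pi : 'S_24) #[pi]%g.

(* A universally convergent sequence s moves stickers by a permutation pi_s of the
   cells: by induction along the run of the identity labelling (through successor
   and limit stages alike), the terminal labelling of any f is f o pi_s.
   Two colours already separate cells, so s ~ t iff pi_s = pi_t, and the run of a
   concatenation is the run of its first factor followed by that of the second, so
   pi_(t s) = pi_s o pi_t; hence UC_L is a group of permutations, and G_L embeds in it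
   because a finite sequence has no limit stage where a label could be lost.  Each
   twist moves a cell by one of the 24 rotations of the cube, and by the same
   induction so does pi_s.  The orbit of a cell under pi_s therefore has d <= 24
   elements; a d-cycle lives in S_24, so d divides N = lcm {ord pi : pi in S_24} and
   pi_s^N = id.  In particular s^(N-1) inverts s. *)

From HB Require Import structures.
From Pilot Require Import Defs.
From mathcomp Require Import all_boot all_fingroup.
From Stdlib Require Import ClassicalEpsilon FunctionalExtensionality.

Set Implicit Arguments.
Unset Strict Implicit.
Unset Printing Implicit Defensive.

Section Positions.
Variables (L : Type) (s : tseq L).

Definition pos_initial (p : option (idx s)) := forall q, ~ plt s q p.

Definition pos_succ (a : idx s) (p : option (idx s)) :=
  plt s (Some a) p /\ forall q, plt s (Some a) q -> ple s p q.

Definition pos_limit (p : option (idx s)) :=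
  (exists q, plt s q p) /\
  forall a, plt s (Some a) p -> exists q, plt s (Some a) q /\ plt s q p.

Hypothesis s_wo : basic_seq s.

Lemma plt_irr p : ~ plt s p p.
Proof. by case: p => [a|] //=; case: s_wo. Qed.

Lemma plt_trans p q r : plt s p q -> plt s q r -> plt s p r.
Proof.
case: s_wo => _ [ilt_trans _].
by case: p => [a|]; case: q => [b|]; case: r => [c|] //=; apply: ilt_trans.
Qed.

Lemma plt_total p q : [\/ plt s p q, p = q | plt s q p].
Proof.
case: s_wo => _ [_ [ilt_total _]].
case: p => [a|]; case: q => [b|] /=; try by [constructor].
by case: (ilt_total a b) => [|[->|]]; constructor.
Qed.

Lemma plt_wf : well_founded (plt s).
Proof.
have acc_some a : Acc (plt s) (Some a).
  case: s_wo => _ [_ [_ ilt_wf]].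
  elim: (ilt_wf a) => {}a _ IH; constructor=> -[b|] ba; [exact: IH | case: ba].
by case=> [a|]; [exact: acc_some | constructor=> -[b|] ba; [exact: acc_some | case: ba]].
Qed.

Lemma ple_plt_trans p q r : ple s p q -> plt s q r -> plt s p r.
Proof. by case=> [->|]; last exact: plt_trans. Qed.

Lemma plt_ple_trans p q r : plt s p q -> ple s q r -> plt s p r.
Proof. by move=> pq [<-|]; last exact: plt_trans. Qed.

Lemma ple_trans p q r : ple s p q -> ple s q r -> ple s p r.
Proof. by case=> [->|pq] // qr; right; exact: plt_ple_trans qr. Qed.

Lemma ple_total p q : ple s p q \/ plt s q p.
Proof. by case: (plt_total p q) => [pq|->|qp]; [left; right|left; left|right]. Qed.

Lemma position_cases p : [\/ pos_initial p, exists a, pos_succ a p | pos_limit p].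
Proof.
case: (classic (exists q, plt s q p)) => [has_pred|no_pred]; last first.
  by constructor 1 => q qp; apply: no_pred; exists q.
case: (classic (exists a, pos_succ a p)) => [|no_succ]; first by constructor 2.
constructor 3; split=> // a ap; apply: NNPP => no_between; apply: no_succ.
exists a; split=> // q aq; case: (ple_total p q) => // qp.
by case: no_between; exists q.
Qed.

Lemma pos_succ_uniq a b p : pos_succ a p -> pos_succ b p -> a = b.
Proof.
move=> [ap a_next] [bp b_next]; case: (plt_total (Some a) (Some b)) => [ab|[]//|ba].
- by case: (plt_irr (ple_plt_trans (a_next _ ab) bp)).
- by case: (plt_irr (ple_plt_trans (b_next _ ba) ap)).
Qed.

Lemma pos_succ_limit a p : pos_succ a p -> ~ pos_limit p.
Proof.
move=> [ap a_next] [_ /(_ a ap) [q [aq qp]]].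
exact: plt_irr (ple_plt_trans (a_next _ aq) qp).
Qed.

Lemma position_ind (P : option (idx s) -> Prop) :
  (forall p, pos_initial p -> P p) ->
  (forall a p, pos_succ a p -> P (Some a) -> P p) ->
  (forall p, pos_limit p -> (forall q, plt s q p -> P q) -> P p) ->
  forall p, P p.
Proof.
move=> Hinit Hsucc Hlim p; elim/(well_founded_ind plt_wf): p => p IH.
case: (position_cases p) => [|[a [ap a_next]]|]; first exact: Hinit.
- by apply: (Hsucc a) => //; exact: IH.
- by move=> plim; exact: Hlim.
Qed.

Section Labellings.
Variables (k : cubekind) (X : Type).
Implicit Types (F G : option (idx s) -> labelling L k X) (f : labelling L k X).

Definition limit_value F p c (x : option X) :=
  (forall v, evconst F p c v -> x = v) /\ ((forall v, ~ evconst F p c v) -> x = None).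

Definition run_at f F p :=
  [/\ pos_initial p -> F p = f,
      forall a, pos_succ a p -> forall c, F p (twist_apply (tw s a) c) = F (Some a) c
    & pos_limit p -> forall c, limit_value F p c (F p c)].

Lemma is_runP f F : is_run s f F <-> forall p, run_at f F p.
Proof.
split=> [[Hinit [Hsucc Hlim]] p|Hrun].
  by split=> [|a [ap a_next]|[has_pred plim]]; [exact: Hinit|exact: Hsucc|exact: Hlim].
split; [|split].
- by move=> p; case: (Hrun p).
- by move=> a p ap a_next; case: (Hrun p) => _ Hsucc _; apply: Hsucc.
- by move=> p has_pred plim; case: (Hrun p) => _ _ Hlim; apply: Hlim.
Qed.

Lemma evconst_uniq F p c v w : evconst F p c v -> evconst F p c w -> v = w.
Proof.
move=> [q [qp Fq]] [r [rp Fr]].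
case: (ple_total q r) => [qr|rq].
- by rewrite -(Fq r qr rp) (Fr r (or_introl erefl) rp).
- by rewrite -(Fr q (or_intror rq) qp) (Fq q (or_introl erefl) qp).
Qed.

Lemma evconst_ext F G p c v :
  (forall q, plt s q p -> F q = G q) -> evconst F p c v <-> evconst G p c v.
Proof.
move=> FG; split=> [[q [qp Fq]]|[q [qp Gq]]]; exists q; split=> // r qr rp.
- by rewrite -FG //; exact: Fq.
- by rewrite FG //; exact: Gq.
Qed.

Lemma limit_value_ext F G p c x :
  (forall q, plt s q p -> F q = G q) -> limit_value F p c x -> limit_value G p c x.
Proof.
move=> FG [Hsome Hnone]; split=> [v /(evconst_ext _ _ FG)|Gnone]; first exact: Hsome.
by apply: Hnone => v /(evconst_ext _ _ FG); apply: Gnone.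
Qed.

Lemma limit_value_some F p c d : limit_value F p c (Some d) -> evconst F p c (Some d).
Proof.
move=> [Hsome Hnone]; apply: NNPP => not_const.
have /Hnone // : forall v, ~ evconst F p c v.
by move=> v const_v; have dv := Hsome v const_v; rewrite -dv in const_v.
Qed.

End Labellings.
End Positions.

Definition axis_eqb (i j : axis) : bool :=
  match i, j with AX, AX | AY, AY | AZ, AZ => true | _, _ => false end.

Lemma axis_eqP : Equality.axiom axis_eqb.
Proof. by case; case; constructor. Qed.

HB.instance Definition _ := hasDecEq.Build axis axis_eqP.

Record triple (X : Type) := Triple { at_x : X; at_y : X; at_z : X }.

Definition tapp X (t : triple X) (j : axis) : X :=
  match j with AX => at_x t | AY => at_y t | AZ => at_z t end.

Definition tfun X (f : axis -> X) : triple X := Triple (f AX) (f AY) (f AZ).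

Lemma tappK X (f : axis -> X) j : tapp (tfun f) j = f j.
Proof. by case: j. Qed.

Definition triple_prod X (t : triple X) := (at_x t, at_y t, at_z t).
Definition prod_triple X (u : X * X * X) := Triple u.1.1 u.1.2 u.2.
Lemma triple_prodK X : cancel (@triple_prod X) (@prod_triple X). Proof. by case. Qed.
HB.instance Definition _ (X : eqType) :=
  Equality.copy (triple X) (can_type (@triple_prodK X)).

(* A signed permutation of the axes: coordinate [j] of the image of a point is
   [± p_(src j)], the sign being [-] iff [flip j]; a marked axis [i] is carried to
   [mark i]. *)
Record srot := SRot { src : triple axis; flip : triple bool; mark : triple axis }.

Definition srot_prod M := (src M, flip M, mark M).
Definition prod_srot (u : triple axis * triple bool * triple axis) := SRot u.1.1 u.1.2 u.2.
Lemma srot_prodK : cancel srot_prod prod_srot. Proof. by case. Qed.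
HB.instance Definition _ := Equality.copy srot (can_type srot_prodK).

Definition srot_comp (M N : srot) : srot :=
  SRot (tfun (fun j => tapp (src N) (tapp (src M) j)))
       (tfun (fun j => tapp (flip M) j (+) tapp (flip N) (tapp (src M) j)))
       (tfun (fun j => tapp (mark M) (tapp (mark N) j))).

Definition srot1 := SRot (tfun id) (tfun (fun=> false)) (tfun id).

Definition quarter_turn (i : axis) : srot :=
  SRot (tfun (rotmark i))
       (tfun (fun j => j == match i with AX => AY | AY => AZ | AZ => AX end))
       (tfun (rotmark i)).

(* Six rounds of closure under the quarter turns reach the 24 rotations of the cube. *)
Definition cube_group : seq srot :=
  iter 6 (fun l => undup (l ++ [seq srot_comp (quarter_turn i) M | i <- [:: AX; AY; AZ], M <- l]))
    [:: srot1].

Lemma size_cube_group : size cube_group = 24.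
Proof. by vm_compute. Qed.

Lemma srot1_cube_group : srot1 \in cube_group.
Proof. by vm_compute. Qed.

Lemma quarter_turn_cube_group i : quarter_turn i \in cube_group.
Proof. by case: i; vm_compute. Qed.

Lemma srot_comp_cube_group M N :
  M \in cube_group -> N \in cube_group -> srot_comp M N \in cube_group.
Proof.
have /allP closed :
    all (fun M => all (fun N => srot_comp M N \in cube_group) cube_group) cube_group.
  by vm_compute.
by move=> /closed /allP; apply.
Qed.

Lemma srot_inv_cube_group M :
  M \in cube_group -> exists2 N, N \in cube_group & srot_comp N M = srot1.
Proof.
have /allP inv : all (fun M => has (fun N => srot_comp N M == srot1) cube_group) cube_group.
  by vm_compute.
by move=> /inv /hasP [N N_in /eqP]; exists N.
Qed.

(* Otherwise unification may try to evaluate the closure, e.g. when [done] meets a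
   goal [M \in cube_group]. *)
Opaque cube_group.

Lemma quarter_turn4 i :
  iter 4 (srot_comp (quarter_turn i)) srot1 = srot1.
Proof. by case: i. Qed.

Section CubeAction.
Variable L : Type.

Definition sgn (b : bool) (c : coord L) := if b then cneg c else c.

Lemma sgnD b b' c : sgn b (sgn b' c) = sgn (b (+) b') c.
Proof. by case: b; case: b'; case: c. Qed.

Definition act_pt (M : srot) (p : point L) : point L :=
  let f j := sgn (tapp (flip M) j) (getc p (tapp (src M) j)) in Pt (f AX) (f AY) (f AZ).

Lemma getc_act_pt M p j :
  getc (act_pt M p) j = sgn (tapp (flip M) j) (getc p (tapp (src M) j)).
Proof. by case: j. Qed.

Lemma point_ext (p q : point L) : (forall j, getc p j = getc q j) -> p = q.
Proof. by case: p q => x y z [x' y' z'] e; congr Pt; [exact: e AX|exact: e AY|exact: e AZ]. Qed.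

Lemma act_pt_comp M N p : act_pt (srot_comp M N) p = act_pt M (act_pt N p).
Proof. by apply: point_ext => j; rewrite !getc_act_pt !tappK sgnD. Qed.

Lemma act_pt1 p : act_pt srot1 p = p.
Proof. by apply: point_ext => j; rewrite getc_act_pt !tappK. Qed.

Lemma rot_quarter_turn i p : Defs.rot i p = act_pt (quarter_turn i) p.
Proof. by case: i; apply: point_ext; case. Qed.

Definition cell_data (k : cubekind) : Type :=
  match k with Edgeless => point L | Edged => (point L * axis)%type end.

Definition cell_val k : cell L k -> cell_data k :=
  match k with Edgeless => fun c => sval c | Edged => fun c => sval c end.

Definition data_pt k : cell_data k -> point L :=
  match k with Edgeless => id | Edged => fst end.

Definition act_data k (M : srot) : cell_data k -> cell_data k :=
  match k with
  | Edgeless => act_pt M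
  | Edged => fun pm => (act_pt M pm.1, tapp (mark M) pm.2)
  end.

Lemma cell_val_inj k : injective (@cell_val k).
Proof.
case: k => -[x x_cell] [y y_cell] /= exy; subst y.
all: by rewrite (bool_irrelevance x_cell y_cell).
Qed.

Lemma act_data_comp k M N (x : cell_data k) :
  act_data (srot_comp M N) x = act_data M (act_data N x).
Proof. by case: k x => [p|[p j]] /=; rewrite act_pt_comp ?tappK. Qed.

Lemma act_data1 k (x : cell_data k) : act_data srot1 x = x.
Proof. by case: k x => [p|[p j]] /=; rewrite act_pt1 ?tappK. Qed.

Lemma getc_quarter_turn k i (x : cell_data k) :
  getc (data_pt (act_data (quarter_turn i) x)) i = getc (data_pt x) i.
Proof. by case: k x => [p|[p j]]; case: i; case: p. Qed.

Section QuarterTurn.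
Variables (k : cubekind) (i : axis) (a : coord L).
Implicit Types c : cell L k.

Definition in_slice (c : cell L k) := getc (data_pt (cell_val c)) i = a.

Lemma qturn_in_slice c :
  in_slice c -> cell_val (qturn_cell i a c) = act_data (quarter_turn i) (cell_val c).
Proof.
rewrite /in_slice; case: k c => c /=; rewrite ?/qturn_ecell ?/qturn_dcell /=.
- by rewrite /qturn_pt; case: excluded_middle_informative => //= _; rewrite rot_quarter_turn.
- rewrite /qturn_pm; case: excluded_middle_informative => //= _.
  by rewrite rot_quarter_turn tappK.
Qed.

Lemma qturn_notin_slice c : ~ in_slice c -> qturn_cell i a c = c.
Proof.
rewrite /in_slice => c_out; apply: cell_val_inj; case: k c c_out => c /=.
- by rewrite /qturn_pt; case: excluded_middle_informative.
- by rewrite /qturn_pm; case: excluded_middle_informative.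
Qed.

Lemma in_slice_qturn c : in_slice c -> in_slice (qturn_cell i a c).
Proof. by move=> c_in; rewrite /in_slice qturn_in_slice // getc_quarter_turn. Qed.

Lemma iter_qturn_in_slice n c : in_slice c ->
  cell_val (iter n (qturn_cell i a) c) =
  act_data (iter n (srot_comp (quarter_turn i)) srot1) (cell_val c).
Proof.
move=> c_in; elim: n => [|n IH] /=; first by rewrite act_data1.
have cn_in : in_slice (iter n (qturn_cell i a) c) by elim: (n) => //= m; exact: in_slice_qturn.
by rewrite qturn_in_slice // IH act_data_comp.
Qed.

Lemma iter_qturn_cube_group n c :
  exists2 M, M \in cube_group & cell_val (iter n (qturn_cell i a) c) = act_data M (cell_val c).
Proof.
case: (classic (in_slice c)) => [c_in|c_out].
  exists (iter n (srot_comp (quarter_turn i)) srot1); last exact: iter_qturn_in_slice.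
  elim: n => [|n IH] /=; first exact: srot1_cube_group.
  exact: srot_comp_cube_group (quarter_turn_cube_group i) IH.
by exists srot1; rewrite ?srot1_cube_group // act_data1 iter_fix // qturn_notin_slice.
Qed.

Lemma qturn4 c : iter 4 (qturn_cell i a) c = c.
Proof.
case: (classic (in_slice c)) => [c_in|c_out]; last by rewrite iter_fix // qturn_notin_slice.
by apply: cell_val_inj; rewrite iter_qturn_in_slice // quarter_turn4 act_data1.
Qed.

End QuarterTurn.

Definition untwist k (b : basic L) (c : cell L k) : cell L k :=
  iter (4 - tpow_nat (bpow b)) (qturn_cell (baxis b) (bval b)) c.

Lemma untwistK k (b : basic L) : cancel (@untwist k b) (twist_apply b).
Proof.
move=> c; rewrite /twist_apply /untwist -iterD.
have -> : tpow_nat (bpow b) + (4 - tpow_nat (bpow b)) = 4 by case: (bpow b).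
exact: qturn4.
Qed.

Lemma twist_applyK k (b : basic L) : cancel (twist_apply b) (@untwist k b).
Proof.
move=> c; rewrite /twist_apply /untwist -iterD.
have -> : 4 - tpow_nat (bpow b) + tpow_nat (bpow b) = 4 by case: (bpow b).
exact: qturn4.
Qed.

Lemma twist_cube_group k (b : basic L) (c : cell L k) :
  exists2 M, M \in cube_group & cell_val (twist_apply b c) = act_data M (cell_val c).
Proof. exact: iter_qturn_cube_group. Qed.

End CubeAction.

Section RunExistence.
Variables (L : Type) (k : cubekind) (X : Type) (s : tseq L) (f : labelling L k X).
Hypothesis s_wo : basic_seq s.

Definition restrict p (G : forall q, plt s q p -> labelling L k X) q : labelling L k X :=
  match excluded_middle_informative (plt s q p) with
  | left qp => G q qp
  | right _ => fun=> None
  end.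

Definition limit_of (F : option (idx s) -> labelling L k X) p : labelling L k X := fun c =>
  match excluded_middle_informative (exists v, evconst F p c v) with
  | left const => proj1_sig (constructive_indefinite_description _ const)
  | right _ => None
  end.

Definition run_step p (G : forall q, plt s q p -> labelling L k X) : labelling L k X :=
  match excluded_middle_informative (exists a, pos_succ a p) with
  | left is_succ => let a := proj1_sig (constructive_indefinite_description _ is_succ) in
      fun c => restrict G (Some a) (untwist (tw s a) c)
  | right _ => if excluded_middle_informative (pos_initial p) then f
               else limit_of (restrict G) p
  end.

Definition canonical_run : option (idx s) -> labelling L k X :=
  Fix (plt_wf s_wo) (fun _ => labelling L k X) (@run_step).

Lemma canonical_runE p : canonical_run p = @run_step p (fun q _ => canonical_run q).
Proof.
rewrite /canonical_run Fix_eq // => q G G' GG'.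
by congr run_step; do 2!apply: functional_extensionality_dep => ?.
Qed.

Lemma restrict_run p q :
  plt s q p -> @restrict p (fun q _ => canonical_run q) q = canonical_run q.
Proof. by rewrite /restrict; case: excluded_middle_informative. Qed.

Lemma limit_ofP F p c : limit_value F p c (limit_of F p c).
Proof.
rewrite /limit_of; case: excluded_middle_informative => [const|not_const].
  case: constructive_indefinite_description => w /= const_w.
  by split=> [v|/(_ w)//]; exact: evconst_uniq.
by split=> // v const_v; case: not_const; exists v.
Qed.

Lemma run_exists : is_run s f canonical_run.
Proof.
apply/is_runP => p; split.
- move=> p_init; rewrite canonical_runE /run_step.
  case: excluded_middle_informative => [is_succ|_].
    by exfalso; case: is_succ => a [ap _]; case: (p_init _ ap).
  by case: excluded_middle_informative.
- move=> a a_succ c; rewrite canonical_runE /run_step.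
  case: excluded_middle_informative => [is_succ|]; last by case; exists a.
  case: constructive_indefinite_description => b /= b_succ.
  rewrite -(pos_succ_uniq s_wo a_succ b_succ) twist_applyK restrict_run //.
  by case: a_succ.
- move=> p_lim c; rewrite canonical_runE /run_step.
  case: excluded_middle_informative => [is_succ|_].
    by exfalso; case: is_succ => a a_succ; case: (pos_succ_limit s_wo a_succ p_lim).
  case: excluded_middle_informative => [p_init|?] /=.
    by case: p_lim => -[q qp] _; case: (p_init q).
  apply: limit_value_ext (limit_ofP _ _ _) => q qp; exact: restrict_run.
Qed.

End RunExistence.

Section IdentityRun.
Variables (L : Type) (k : cubekind) (s : tseq L).
Hypothesis s_wo : basic_seq s.
Variable Fid : option (idx s) -> labelling L k (cell L k).
Hypothesis Fid_run : is_run s (idlab L k) Fid.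

Lemma run_limit_some X (F : option (idx s) -> labelling L k X) f p c d :
  is_run s f F -> pos_limit p -> F p c = Some d -> evconst F p c (Some d).
Proof.
move=> /is_runP /(_ p) [_ _ Hlim] p_lim Fpc.
by apply: limit_value_some; rewrite -Fpc; exact: Hlim.
Qed.

(* [Fid p c = Some d]: at stage [p] the sticker that started on [d] lies on [c]. *)
Lemma run_transport X (f : labelling L k X) F :
  is_run s f F -> forall p c d, Fid p c = Some d -> F p c = f d.
Proof.
move=> F_run; have /is_runP Fid_at := Fid_run; have /is_runP F_at := F_run.
elim/(position_ind s_wo) => [p p_init|a p a_succ IH|p p_lim IH] c d.
- by case: (Fid_at p) => /(_ p_init) -> _ _; case: (F_at p) => /(_ p_init) -> _ _ [<-].
- rewrite -(untwistK (tw s a) c).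
  case: (Fid_at p) => _ /(_ a a_succ) -> _; case: (F_at p) => _ /(_ a a_succ) -> _.
  exact: IH.
- move=> /(run_limit_some Fid_run p_lim) [q [qp Fid_q]].
  case: (F_at p) => _ _ /(_ p_lim c) [Hsome _]; apply: Hsome.
  by exists q; split=> // r qr rp; apply: IH => //; exact: Fid_q.
Qed.

Lemma id_run_inj p c c' d : Fid p c = Some d -> Fid p c' = Some d -> c = c'.
Proof.
have /is_runP Fid_at := Fid_run.
elim/(position_ind s_wo): p c c' d => [p p_init|a p a_succ IH|p p_lim IH] c c' d.
- by case: (Fid_at p) => /(_ p_init) -> _ _ [->] [].
- rewrite -(untwistK (tw s a) c) -(untwistK (tw s a) c').
  by case: (Fid_at p) => _ /(_ a a_succ) Hsucc _; rewrite !Hsucc => /IH e /e ->.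
- move=> /(run_limit_some Fid_run p_lim) [q [qp Fq]].
  move=> /(run_limit_some Fid_run p_lim) [r [rp Fr]].
  case: (ple_total s_wo q r) => [qr|rq].
  + exact: IH rp _ _ _ (Fq r qr rp) (Fr r (or_introl erefl) rp).
  + exact: IH qp _ _ _ (Fq q (or_introl erefl) qp) (Fr q (or_intror rq) qp).
Qed.

Lemma id_run_cube_group p c d : Fid p c = Some d ->
  exists2 M, M \in cube_group & cell_val c = act_data M (cell_val d).
Proof.
have /is_runP Fid_at := Fid_run.
elim/(position_ind s_wo): p c d => [p p_init|a p a_succ IH|p p_lim IH] c d.
- case: (Fid_at p) => /(_ p_init) -> _ _ [<-].
  by exists srot1; [exact: srot1_cube_group | rewrite act_data1].
- rewrite -(untwistK (tw s a) c).
  case: (Fid_at p) => _ /(_ a a_succ) -> _ /IH [M M_in eM].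
  have [N N_in eN] := twist_cube_group (tw s a) (untwist (tw s a) c).
  exists (srot_comp N M); first exact: srot_comp_cube_group.
  by rewrite eN eM act_data_comp.
- move=> /(run_limit_some Fid_run p_lim) [q [qp Fq]].
  exact: IH qp _ _ (Fq q (or_introl erefl) qp).
Qed.

End IdentityRun.

Section RunTransfer.
Variables (L : Type) (k : cubekind) (X : Type) (s u : tseq L).
Hypotheses (s_wo : basic_seq s) (u_wo : basic_seq u).
Variables (m : option (idx s) -> option (idx u)) (m_idx : idx s -> idx u).
Variables (p : option (idx s)) (P : option (idx u)).
Variables (f g : labelling L k X) (F : option (idx s) -> labelling L k X).
Variable G : option (idx u) -> labelling L k X.

(* [m] embeds the positions below [p] in [s] cofinally onto a final segment of the
   positions below [P] in [u], compatibly with the twists and the labellings. *)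
Hypothesis m_some : forall a, m (Some a) = Some (m_idx a).
Hypothesis tw_m : forall a, tw u (m_idx a) = tw s a.
Hypothesis m_plt : forall x y, plt u (m x) (m y) <-> plt s x y.
Hypothesis m_below : forall x, plt u (m x) P <-> plt s x p.
Hypothesis m_cofinal : forall q, plt u q P -> exists2 x, plt s x p & ple u q (m x).
Hypothesis m_final : forall x q, plt s x p -> ple u (m x) q -> plt u q P -> exists y, q = m y.
Hypothesis G_m : forall x, plt s x p -> G (m x) = F x.
Hypothesis G_P : G P = F p.
Hypothesis f_g : pos_initial P -> f = g.

Lemma m_ple x y : ple s x y -> ple u (m x) (m y).
Proof. by case=> [->|/m_plt]; [left|right]. Qed.

Lemma m_ple_reflect x y : ple u (m x) (m y) -> ple s x y.
Proof.
move=> mxy; case: (ple_total s_wo x y) => // /m_plt myx.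
by case: (plt_irr u_wo (ple_plt_trans u_wo mxy myx)).
Qed.

Lemma evconst_transfer c v : evconst G P c v <-> evconst F p c v.
Proof.
split=> [[q [qP Gq]]|[x [xp Fx]]].
- have [x xp qx] := m_cofinal qP; exists x; split=> // y xy yp.
  rewrite -G_m //; apply: Gq (ple_trans u_wo qx (m_ple xy)) _.
  exact/m_below.
- exists (m x); split; first exact/m_below.
  move=> q xq qP; have [y eq_q] := m_final xp xq qP; subst q.
  have yp := (m_below y).1 qP.
  by rewrite G_m // Fx //; exact: m_ple_reflect.
Qed.

Lemma run_at_transfer : run_at f F p -> run_at g G P.
Proof.
case=> Finit Fsucc Flim; split.
- move=> P_init; have p_init : pos_initial p by move=> x /(m_below x).2; apply: P_init.
  by rewrite G_P Finit // f_g.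
- move=> b [bP b_next] c.
  have [x xp bx] := m_cofinal bP.
  have mx_b : m x = Some b.
    case: bx => // bmx; have Pmx := b_next _ bmx.
    by case: (plt_irr u_wo (ple_plt_trans u_wo Pmx ((m_below x).2 xp))).
  case: x mx_b xp {bx} => [a|_ []]; rewrite m_some => -[eq_b] ap; subst b.
  rewrite G_P tw_m -m_some G_m // Fsucc //; split=> // y ay.
  case: (ple_total s_wo p y) => // yp; exfalso.
  have Pmy : ple u P (m y) by apply: b_next; rewrite -m_some; exact/m_plt.
  exact: (plt_irr u_wo (ple_plt_trans u_wo Pmy ((m_below y).2 yp))).
- move=> [[q qP] P_lim] c.
  have p_lim : pos_limit p.
    have [x xp _] := m_cofinal qP; split=> [|a ap]; first by exists x.
    have maP := (m_below _).2 ap; rewrite m_some in maP.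
    have [r [ar rP]] := P_lim _ maP.
    have [y eq_r] : exists y, r = m y by apply: m_final ap _ rP; rewrite m_some; right.
    subst r; exists y; split; last exact: (m_below y).1 rP.
    by apply/m_plt; rewrite m_some.
  have [Fsome Fnone] := Flim p_lim c.
  rewrite G_P; split=> [v /evconst_transfer|not_const]; first exact: Fsome.
  by apply: Fnone => v /evconst_transfer; apply: not_const.
Qed.

End RunTransfer.

Section Concatenation.
Variables (L : Type) (s t : tseq L).
Hypotheses (s_wo : basic_seq s) (t_wo : basic_seq t).

Local Notation u := (bcat t s).

Lemma bcat_wo : basic_seq u.
Proof.
case: s_wo => s_irr [s_trans [s_total s_wf]]; case: t_wo => t_irr [t_trans [t_total t_wf]].
split; [|split; [|split]].
- by case=> [a|b] /=; [exact: s_irr|exact: t_irr].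
- by case=> [a|a] [b|b] [c|c] //=; [exact: s_trans|exact: t_trans].
- case=> [a|a] [b|b] /=; try by [left|right; right].
  + by case: (s_total a b) => [|[->|]]; [left|right; left|right; right].
  + by case: (t_total a b) => [|[->|]]; [left|right; left|right; right].
- have acc_inl a : Acc (ilt u) (inl a).
    elim: (s_wf a) => {}a _ IH; constructor=> -[b|b] /= ba; [exact: IH|case: ba].
  case=> [a|b]; first exact: acc_inl.
  elim: (t_wf b) => {}b _ IH; constructor=> -[a|a] /= ab; [exact: acc_inl|exact: IH].
Qed.

Definition inl_pos (x : option (idx s)) : option (idx u) := omap inl x.
Definition inr_pos (y : option (idx t)) : option (idx u) := omap inr y.

Lemma inl_pos_plt x x' : plt u (inl_pos x) (inl_pos x') <-> plt s x x'.
Proof. by case: x; case: x'. Qed.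

Lemma inr_pos_plt y y' : plt u (inr_pos y) (inr_pos y') <-> plt t y y'.
Proof. by case: y; case: y'. Qed.

Lemma inl_inr_pos_plt a y : plt u (Some (inl a)) (inr_pos y).
Proof. by case: y. Qed.

Lemma inr_inl_pos_ple y a : ~ ple u (inr_pos y) (Some (inl a)).
Proof. by case: y => [b|] [] //. Qed.

Variables (k : cubekind) (X : Type) (f : labelling L k X).
Variables (Fs : option (idx s) -> labelling L k X) (Ft : option (idx t) -> labelling L k X).
Hypotheses (Fs_run : is_run s f Fs) (Ft_run : is_run t (Fs None) Ft).

Definition cat_run (q : option (idx u)) : labelling L k X :=
  match q with
  | Some (inl a) => Fs (Some a)
  | Some (inr b) => Ft (Some b)
  | None => Ft None
  end.

Lemma cat_run_inr y : cat_run (inr_pos y) = Ft y.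
Proof. by case: y. Qed.

Lemma cat_run_at_inl a : run_at f cat_run (Some (inl a)).
Proof.
apply: (run_at_transfer s_wo bcat_wo (m := inl_pos) (m_idx := inl) (p := Some a)
          (f := f) (F := Fs)) => //.
- exact: inl_pos_plt.
- by move=> x; rewrite -[Some (inl a)]/(inl_pos (Some a)) inl_pos_plt.
- move=> q; case: q => [[a'|b]|] //= a'a.
  by exists (Some a') => //; exact: or_introl.
- move=> x q; case: x => [a'|] //= a'a.
  by case: q => [[a''|b]|] //= _ _; exists (Some a'').
- by case.
- by have /is_runP := Fs_run.
Qed.

Lemma cat_run_at_inr y : ~ pos_initial y -> run_at f cat_run (inr_pos y).
Proof.
move=> y_not_init; have [y0 y0y] : exists y0, plt t y0 y.
  by apply: NNPP => none; apply: y_not_init => y0 y0y; apply: none; exists y0.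
apply: (run_at_transfer t_wo bcat_wo (m := inr_pos) (m_idx := inr) (p := y)
          (f := Fs None) (F := Ft)) => //.
- exact: inr_pos_plt.
- move=> x; exact: inr_pos_plt.
- move=> q; case: q => [[a|b]|] qy.
  + by exists y0 => //; right; exact: inl_inr_pos_plt.
  + by exists (Some b); [exact/inr_pos_plt|left].
  + by case: y qy {y_not_init y0y}.
- move=> x q; case: q => [[a|b]|] xy xq _; first by case: (inr_inl_pos_ple xq).
  + by exists (Some b).
  + by exists None.
- by move=> x _; exact: cat_run_inr.
- exact: cat_run_inr.
- by move=> P_init; case: (P_init (inr_pos y0)); exact/inr_pos_plt.
- by have /is_runP := Ft_run.
Qed.

(* When [y] is the first position of [t], the position [inr_pos y] is where [s] ends. *)
Lemma cat_run_at_junction y : pos_initial y -> run_at f cat_run (inr_pos y).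
Proof.
move=> y_init.
have no_inr b : ~ plt u (Some (inr b)) (inr_pos y).
  by rewrite -[Some (inr b)]/(inr_pos (Some b)) inr_pos_plt; apply: y_init.
apply: (run_at_transfer s_wo bcat_wo (m := inl_pos) (m_idx := inl) (p := None)
          (f := f) (F := Fs)) => //.
- exact: inl_pos_plt.
- by case=> [a|] /=; split=> // _; exact: inl_inr_pos_plt.
- move=> q; case: q => [[a|b]|] qy.
  + by exists (Some a) => //; left.
  + by case: (no_inr b).
  + by case: y qy {y_init no_inr}.
- move=> x q; case: q => [[a|b]|] _ _ qy.
  + by exists (Some a).
  + by case: (no_inr b).
  + by case: y qy {y_init no_inr}.
- by case.
- by rewrite cat_run_inr; have /is_runP /(_ y) [/(_ y_init)] := Ft_run.
- by have /is_runP := Fs_run.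
Qed.

Lemma cat_is_run : is_run u f cat_run.
Proof.
apply/is_runP => q.
have [[a ->]|[y ->]] : (exists a, q = Some (inl a)) \/ exists y, q = inr_pos y.
  by case: q => [[a|b]|]; [left; exists a|right; exists (Some b)|right; exists None].
- exact: cat_run_at_inl.
- by case: (classic (pos_initial y)); [exact: cat_run_at_junction|exact: cat_run_at_inr].
Qed.

End Concatenation.

Definition uc_perm L k (s : tseq L) (pi : cell L k -> cell L k) : Prop :=
  basic_seq s /\ exists2 F, is_run s (idlab L k) F & forall c, F None c = Some (pi c).

Section TerminalPermutation.
Variables (L : Type) (k : cubekind).
Implicit Types (s t : tseq L) (pi ps pt : cell L k -> cell L k).

Lemma uc_permP s : uc k s <-> exists pi, uc_perm s pi.
Proof.
split.
  move=> [s_wo [g [[F [F_run Fg]] g_legal]]]; subst g.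
  exists (fun c => if F None c is Some d then d else c); split=> //; exists F => // c.
  by case: (F None c) (g_legal c) => [d|/(_ erefl)].
move=> [pi [s_wo [F F_run F_pi]]]; split=> //; exists (F None); split; first by exists F.
by move=> c; rewrite F_pi.
Qed.

Lemma uc_perm_runs_to X s pi (f g : labelling L k X) :
  uc_perm s pi -> runs_to s f g <-> g = f \o pi.
Proof.
move=> [s_wo [Fid Fid_run Fid_pi]].
have terminal F : is_run s f F -> F None = f \o pi.
  move=> F_run; apply: functional_extensionality => c.
  exact: (run_transport s_wo Fid_run F_run (Fid_pi c)).
split=> [[F [F_run <-]]|->]; first exact: terminal.
by exists (canonical_run f s_wo); split; [exact: run_exists|exact: terminal (run_exists f s_wo)].
Qed.

Lemma uc_perm_sim s t ps pt : uc_perm s ps -> uc_perm t pt -> sim k s t <-> ps =1 pt.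
Proof.
move=> s_ps t_pt; split=> [sim_st c|eq_p f g].
  pose f : labelling L k color :=
    fun x => Some (if excluded_middle_informative (x = ps c) then Red else White).
  have s_run := (uc_perm_runs_to f (f \o ps) s_ps).2 erefl.
  have /(congr1 (fun h => h c)) := (uc_perm_runs_to _ _ t_pt).1 ((sim_st f _).1 s_run).
  by rewrite /f /=; do 2!case: excluded_middle_informative.
have fps : f \o ps = f \o pt by apply: functional_extensionality => c /=; rewrite eq_p.
split=> [/(uc_perm_runs_to _ _ s_ps) ->|/(uc_perm_runs_to _ _ t_pt) ->].
- by apply/(uc_perm_runs_to _ _ t_pt).
- by apply/(uc_perm_runs_to _ _ s_ps).
Qed.

Lemma uc_perm_cat s t ps pt :
  uc_perm s ps -> uc_perm t pt -> uc_perm (bcat t s) (ps \o pt).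
Proof.
move=> [s_wo [Fs Fs_run Fs_ps]] [t_wo [Fid Fid_run Fid_pt]].
have Ft_run := run_exists (Fs None) t_wo.
split; first exact: bcat_wo.
exists (cat_run Fs (canonical_run (Fs None) t_wo)); first exact: cat_is_run.
by move=> c /=; rewrite (run_transport t_wo Fid_run Ft_run (Fid_pt c)) Fs_ps.
Qed.

Lemma uc_perm_empty : uc_perm (bempty L) (@id (cell L k)).
Proof.
split.
  split; first by case.
  split; first by case.
  split; first by case.
  by move=> a; case: a.
exists (fun=> idlab L k) => //; apply/is_runP => p.
split=> [//|[]|[[[[]|] []]]].
Qed.

Lemma uc_perm_pow s pi n : uc_perm s pi -> uc_perm (bseqpow s n) (iter n pi).
Proof.
move=> s_pi; elim: n => [|n IH] /=; first exact: uc_perm_empty.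
have -> : iter n.+1 pi = iter n pi \o pi.
  by apply: functional_extensionality => c; rewrite iterSr.
exact: uc_perm_cat.
Qed.

Lemma uc_perm_inj s pi : uc_perm s pi -> injective pi.
Proof.
move=> [s_wo [F F_run F_pi]] c c' pi_cc'.
by apply: (id_run_inj s_wo F_run (F_pi c)); rewrite F_pi pi_cc'.
Qed.

Lemma uc_perm_cube_group s pi c : uc_perm s pi ->
  exists2 M, M \in cube_group & cell_val (pi c) = act_data M (cell_val c).
Proof.
move=> [s_wo [F F_run F_pi]].
have [M M_in eM] := id_run_cube_group s_wo F_run (F_pi c).
have [N N_in NM] := srot_inv_cube_group M_in.
by exists N; last rewrite eM -act_data_comp NM act_data1.
Qed.

End TerminalPermutation.

Section FiniteSequences.
Variable L : Type.

Lemma exists_max_in (T : Type) (R : T -> T -> Prop) (P : T -> Prop) (l : list T) :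
  (forall a b c, R a b -> R b c -> R a c) -> (forall a b, R a b \/ a = b \/ R b a) ->
  (exists a, List.In a l /\ P a) ->
  exists a, P a /\ forall b, List.In b l -> P b -> R b a \/ b = a.
Proof.
move=> R_trans R_total; elim: l => [[a [[]]]|x l IH [a [/= a_in Pa]]].
case: (classic (exists a, List.In a l /\ P a)) => [/IH [b [Pb b_max]]|none].
  case: (classic (P x)) => [Px|notPx]; last first.
    by exists b; split=> // c [<-|c_in] Pc; [case: notPx|exact: (b_max c c_in Pc)].
  case: (R_total x b) => [xb|[xb|bx]].
  - by exists b; split=> // c [<-|c_in] Pc; [left|exact: (b_max c c_in Pc)].
  - by subst b; exists x; split=> // c [<-|c_in] Pc; [right|exact: (b_max c c_in Pc)].
  - exists x; split=> // c [<-|c_in] Pc; first by right.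
    by case: (b_max c c_in Pc) => [cb|->]; left; [exact: (R_trans _ _ _ cb bx)|].
case: a_in => [xa|a_in]; last by case: none; exists a.
subst a; exists x; split=> // c [<-|c_in] Pc; first by right.
by case: none; exists c.
Qed.

Lemma finite_not_limit (s : tseq L) (p : option (idx s)) :
  basic_seq s -> finite_seq s -> ~ pos_limit p.
Proof.
move=> s_wo [l l_all] [[q qp] p_lim].
have [a [ap a_max]] : exists a, plt s (Some a) p /\
    forall b, List.In b l -> plt s (Some b) p -> ilt s b a \/ b = a.
  case: s_wo => _ [s_trans [s_total _]]; apply: exists_max_in => //.
  by case: q qp => [a|[]] ap; exists a.
have [[b|] [ab bp]] := p_lim a ap; last by case: bp.
case: (a_max b (l_all b) bp) => [ba|eq_ba]; last by subst b; case: (plt_irr s_wo ab).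
exact: (plt_irr s_wo (plt_trans s_wo ab (ba : plt s (Some b) (Some a)))).
Qed.

Lemma finite_uc k (s : tseq L) : basic_seq s -> finite_seq s -> uc k s.
Proof.
move=> s_wo s_fin; set F := canonical_run (idlab L k) s_wo.
have F_run : is_run s (idlab L k) F := run_exists _ s_wo.
split=> //; exists (F None); split; first by exists F.
have /is_runP F_at := F_run.
suff F_legal p c : F p c <> None by move=> c; exact: F_legal.
elim/(position_ind s_wo): p c => [p p_init|a p a_succ IH|p p_lim _] c.
- by case: (F_at p) => /(_ p_init) ->.
- by rewrite -(untwistK (tw s a) c); case: (F_at p) => _ /(_ a a_succ) ->.
- by case: (finite_not_limit s_wo s_fin p_lim).
Qed.

Lemma finite_bcat (s t : tseq L) : finite_seq s -> finite_seq t -> finite_seq (bcat t s).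
Proof.
move=> [ls ls_all] [lt lt_all]; exists (List.map inl ls ++ List.map inr lt).
by case=> [a|b]; apply: List.in_or_app; [left|right]; apply: List.in_map.
Qed.

Lemma finite_bseqpow (s : tseq L) n : finite_seq s -> finite_seq (bseqpow s n).
Proof.
move=> s_fin; elim: n => [|n IH] /=; last exact: finite_bcat.
by exists nil; case.
Qed.

End FiniteSequences.

Lemma iter_returns_within (A : eqType) (T : Type) (f : T -> T) (x : T) (G : seq A)
    (P : A -> T -> Prop) :
  injective f -> (forall M y y', P M y -> P M y' -> y = y') ->
  (forall j, exists2 M, M \in G & P M (iter j f x)) ->
  exists2 d, 0 < d <= size G & iter d f x = x.
Proof.
move=> f_inj P_fun orbit.
have [code code_spec] : exists code : nat -> A, forall j, code j \in G /\ P (code j) (iter j f x).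
  have pick j : {M | M \in G /\ P M (iter j f x)}.
    by apply: constructive_indefinite_description; have [M] := orbit j; exists M.
  by exists (fun j => sval (pick j)) => j; exact: svalP (pick j).
have : ~~ uniq (mkseq code (size G).+1).
  apply/negP => /uniq_leq_size le_size.
  have : size (mkseq code (size G).+1) <= size G.
    by apply: le_size => M /mapP [j _ ->]; exact: (code_spec j).1.
  by rewrite size_mkseq ltnn.
case/(uniqPn (code 0)) => i [j []]; rewrite size_mkseq => lt_ij lt_jG.
rewrite !nth_mkseq ?(ltn_trans lt_ij lt_jG) // => code_ij.
have iter_inj n : injective (iter n f) by elim: n => // n IH y y' /= /f_inj /IH.
have : iter i f x = iter j f x.
  by apply: (P_fun (code i)); [|rewrite code_ij]; [exact: (code_spec i).2|exact: (code_spec j).2].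
rewrite -(subnKC (ltnW lt_ij)) iterD => /esym /iter_inj return_x.
by exists (j - i); rewrite // subn_gt0 lt_ij (leq_trans (leq_subr i j)).
Qed.

Lemma dvdn_lcm_perm_order n d : 0 < d <= n -> d %| \big[lcmn/1]_(s : 'S_n) #[s]%g.
Proof.
case/andP=> d_gt0 le_dn; have n_gt0 := leq_trans d_gt0 le_dn.
pose cyc m := if m < d then m.+1 %% d else m.
have cyc_lt (i : 'I_n) : cyc i < n.
  by rewrite /cyc; case: ifP => // _; exact: leq_trans (ltn_pmod _ d_gt0) le_dn.
have cyc_inj : injective (fun i => Ordinal (cyc_lt i)).
  move=> i j /(congr1 val); rewrite /cyc /=; case: ifP => i_lt; case: ifP => j_lt eij.
  - apply: val_inj; move/eqP: eij; rewrite -addn1 -(addn1 j) eqn_modDr.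
    by rewrite !modn_small // => /eqP.
  - by move: (ltn_pmod i.+1 d_gt0); rewrite eij j_lt.
  - by move: (ltn_pmod j.+1 d_gt0); rewrite -eij i_lt.
  - exact: val_inj.
pose sigma := perm cyc_inj.
have sigma_iter j : val (iter j sigma (Ordinal n_gt0)) = j %% d.
  elim: j => [|j IH]; first by rewrite mod0n.
  by rewrite iterS permE /= IH /cyc ltn_pmod // -addn1 modnDml addn1.
apply: dvdn_trans (biglcmn_sup sigma _ _) => //.
by rewrite /dvdn -sigma_iter -permX expg_order perm1.
Qed.

Lemma lcm_perm_order_gt0 n : 0 < \big[lcmn/1]_(s : 'S_n) #[s]%g.
Proof.
apply: (big_ind (fun m => 0 < m)) => [//|a b a_gt0 b_gt0|s _]; last exact: order_gt0.
by rewrite lcmn_gt0 a_gt0.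
Qed.

Lemma S24_lcm_order_gt0 : 0 < S24_lcm_order.
Proof. exact: lcm_perm_order_gt0. Qed.

Section Period.
Variables (L : Type) (k : cubekind) (s : tseq L) (pi : cell L k -> cell L k).
Hypothesis s_pi : uc_perm s pi.

Lemma uc_perm_period c : exists2 d, 0 < d <= 24 & iter d pi c = c.
Proof.
rewrite -size_cube_group.
apply: (iter_returns_within (uc_perm_inj s_pi)
          (P := fun M y => cell_val y = act_data M (cell_val c))).
  by move=> M y y' ey ey'; apply: cell_val_inj; rewrite ey ey'.
elim=> [|j [M M_in eM]]; first by exists srot1; [exact: srot1_cube_group|rewrite act_data1].
have [N N_in eN] := uc_perm_cube_group (iter j pi c) s_pi.
exists (srot_comp N M); first exact: srot_comp_cube_group.
by rewrite iterS eN eM act_data_comp.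
Qed.

Lemma iter_S24_lcm_order : iter S24_lcm_order pi =1 id.
Proof.
move=> c; have [d d_range dc] := uc_perm_period c; rewrite /S24_lcm_order.
have /dvdnP [q ->] := dvdn_lcm_perm_order d_range.
by rewrite iterM iter_fix.
Qed.

Lemma bseqpow_inverse :
  sim k (bcat (bseqpow s S24_lcm_order.-1) s) (bempty L) /\
  sim k (bcat s (bseqpow s S24_lcm_order.-1)) (bempty L).
Proof.
have pow_pi := uc_perm_pow S24_lcm_order.-1 s_pi.
have N_eq : S24_lcm_order = S24_lcm_order.-1.+1 by rewrite prednK // S24_lcm_order_gt0.
split.
- apply/(uc_perm_sim (uc_perm_cat s_pi pow_pi) (uc_perm_empty L k)) => c /=.
  by rewrite -iterS -N_eq iter_S24_lcm_order.
- apply/(uc_perm_sim (uc_perm_cat pow_pi s_pi) (uc_perm_empty L k)) => c /=.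
  by rewrite -iterSr -N_eq iter_S24_lcm_order.
Qed.

End Period.

Unset Implicit Arguments.

Theorem lemma3p8 (L : Type) (HL : infinite_type L) (k : cubekind) :
  (* uc_L is closed under concatenation *)
  (forall s t : tseq L, uc k s -> uc k t -> uc k (bcat t s)) /\
  (* ~ is a congruence for concatenation on uc_L *)
  (forall s s' t t' : tseq L, uc k s -> uc k s' -> uc k t -> uc k t' ->
     sim k s s' -> sim k t t' -> sim k (bcat t s) (bcat t' s')) /\
  (* associativity *)
  (forall s t u : tseq L, uc k s -> uc k t -> uc k u ->
     sim k (bcat u (bcat t s)) (bcat (bcat u t) s)) /\
  (* identity *)
  uc k (bempty L) /\
  (forall s : tseq L, uc k s ->
     sim k (bcat (bempty L) s) s /\ sim k (bcat s (bempty L)) s) /\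
  (* inverses *)
  (forall s : tseq L, uc k s -> exists t : tseq L,
     uc k t /\ sim k (bcat t s) (bempty L) /\ sim k (bcat s t) (bempty L)) /\
  (* G_L is a subgroup: finite basic sequences are universally convergent,
     and are closed under concatenation and inverses *)
  (forall s : tseq L, basic_seq s -> finite_seq s -> uc k s) /\
  (forall s t : tseq L, basic_seq s -> finite_seq s -> basic_seq t -> finite_seq t ->
     finite_seq (bcat t s)) /\
  (forall s : tseq L, basic_seq s -> finite_seq s -> exists t : tseq L,
     basic_seq t /\ finite_seq t /\
     sim k (bcat t s) (bempty L) /\ sim k (bcat s t) (bempty L)) /\
  (* every element of UC_L has order at most lcm{ord pi : pi in S_24} *)
  (forall s : tseq L, uc k s -> exists n : nat,
     (1 <= n <= S24_lcm_order)%N /\ sim k (bseqpow s n) (bempty L)).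
Proof.
have ucP := @uc_permP L k; have empty := uc_perm_empty L k.
split=> [s t /ucP[ps s_ps] /ucP[pt t_pt]|].
  by apply/ucP; exists (ps \o pt); exact: uc_perm_cat s_ps t_pt.
split=> [s s' t t' /ucP[ps s_ps] /ucP[ps' s_ps'] /ucP[pt t_pt] /ucP[pt' t_pt']|].
  rewrite (uc_perm_sim s_ps s_ps') (uc_perm_sim t_pt t_pt') => eq_s eq_t.
  apply/(uc_perm_sim (uc_perm_cat s_ps t_pt) (uc_perm_cat s_ps' t_pt')) => c /=.
  by rewrite eq_t eq_s.
split=> [s t u /ucP[ps s_ps] /ucP[pt t_pt] /ucP[pu u_pu]|].
  have stu := uc_perm_cat (uc_perm_cat s_ps t_pt) u_pu.
  exact/(uc_perm_sim stu (uc_perm_cat s_ps (uc_perm_cat t_pt u_pu))).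
split; first by apply/ucP; exists id.
split=> [s /ucP[ps s_ps]|].
  have [left_id right_id] := (uc_perm_cat s_ps empty, uc_perm_cat empty s_ps).
  by split; [apply/(uc_perm_sim left_id s_ps)|apply/(uc_perm_sim right_id s_ps)].
split=> [s /ucP[ps s_ps]|].
  exists (bseqpow s S24_lcm_order.-1); split; last exact: bseqpow_inverse s_ps.
  by apply/ucP; exists (iter S24_lcm_order.-1 ps); exact: uc_perm_pow.
split=> [s|]; first exact: finite_uc.
split=> [s t _ s_fin _ t_fin|]; first exact: finite_bcat.
split=> [s s_wo s_fin|s /ucP[ps s_ps]].
  have /ucP[ps s_ps] := finite_uc k s_wo s_fin.
  exists (bseqpow s S24_lcm_order.-1); split; first by case: (uc_perm_pow S24_lcm_order.-1 s_ps).
  by split; [exact: finite_bseqpow|exact: bseqpow_inverse s_ps].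
exists S24_lcm_order; split; first by rewrite S24_lcm_order_gt0 leqnn.
apply/(uc_perm_sim (uc_perm_pow S24_lcm_order s_ps) empty); exact: iter_S24_lcm_order s_ps.
Qed.
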